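(* Let $\langle S, \preceq\rangle$ be a partially ordered set and let $\mathcal{G}$ be a group acting on $S$. For $a \in S$ write $[a] = \{Ta : T \in \mathcal{G}\}$ and let $S/\mathcal{G}$ be the set of these equivalence classes. Define the strong induced relation on $S/\mathcal{G}$ by: $A \preceq_{\mathcal{G},s} B$ iff for all $a \in A$ there exists $b \in B$ with $a \preceq b$; and the weak induced relation by: $A \preceq_{\mathcal{G},w} B$ iff there exist $a \in A$ and $b \in B$ with $a \preceq b$. Then: (1) the strong relation $\preceq_{\mathcal{G},s}$ is a preorder on $S/\mathcal{G}$; (2) if $\mathcal{G}$ is increasing on $S$ (i.e. for all $T \in \mathcal{G}$ and $a,b \in S$, $a \preceq b$ implies $Ta \preceq Tb$), then the strong and weak relations coincide; (3) if $\mathcal{G}$ acts transversely on $S$ (i.e. for all $T \in \mathcal{G}$ and $a \in S$, $Ta \preceq a$ implies $Ta = a$), then the strong relation $\preceq_{\mathcal{G},s}$ is a partial order on $S/\mathcal{G}$. *)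

Set Implicit Arguments.

Record group := Group {
  gcar :> Type;
  gmul : gcar -> gcar -> gcar;
  gone : gcar;
  ginv : gcar -> gcar;
  gmulA : forall x y z, gmul x (gmul y z) = gmul (gmul x y) z;
  gmul1 : forall x, gmul gone x = x;
  gmulV : forall x, gmul (ginv x) x = gone
}.

Definition is_action (G : group) (S : Type) (act : G -> S -> S) : Prop :=
  (forall x, act (gone G) x = x) /\
  (forall g h x, act (gmul G g h) x = act g (act h x)).

Definition is_preorder (X : Type) (R : X -> X -> Prop) : Prop :=
  (forall x, R x x) /\ (forall x y z, R x y -> R y z -> R x z).

Definition is_partial_order (X : Type) (R : X -> X -> Prop) : Prop :=
  is_preorder R /\ (forall x y, R x y -> R y x -> x = y).

Definition orbit (G : group) (S : Type) (act : G -> S -> S) (a : S) : S -> Prop :=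
  fun x => exists T : G, x = act T a.

Definition orbits (G : group) (S : Type) (act : G -> S -> S) : Type :=
  { A : S -> Prop | exists a, A = @orbit G S act a }.

Definition strong_rel (G : group) (S : Type) (le : S -> S -> Prop)
  (act : G -> S -> S) (A B : @orbits G S act) : Prop :=
  forall a, proj1_sig A a -> exists b, proj1_sig B b /\ le a b.

Definition weak_rel (G : group) (S : Type) (le : S -> S -> Prop)
  (act : G -> S -> S) (A B : @orbits G S act) : Prop :=
  exists a b, proj1_sig A a /\ proj1_sig B b /\ le a b.

Definition increasing (G : group) (S : Type) (le : S -> S -> Prop)
  (act : G -> S -> S) : Prop :=
  forall (T : G) a b, le a b -> le (act T a) (act T b).

Definition transverse (G : group) (S : Type) (le : S -> S -> Prop)
  (act : G -> S -> S) : Prop :=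
  forall (T : G) a, le (act T a) a -> act T a = a.

(* An increasing action transports a single
   comparison a <= b to every translate Ta <= Tb, which makes the weak relation
   strong.  For antisymmetry, A <= B <= A yields a <= b <= Ta with a, Ta in one
   orbit; transversality applied to T^-1 forces Ta = a, hence b = a and A = B. *)
From Stdlib Require Import FunctionalExtensionality PropExtensionality ProofIrrelevance.
From Corelib Require Import ssreflect.

Set Implicit Arguments.

Section Orbits.

Variables (G : group) (S : Type) (act : G -> S -> S).
Hypothesis Hact : is_action G act.

Lemma act1 x : act (gone G) x = x.
Proof. exact (proj1 Hact x). Qed.

Lemma actM g h x : act (gmul G g h) x = act g (act h x).
Proof. exact (proj2 Hact g h x). Qed.

Lemma act_invK (T : G) x : act (ginv G T) (act T x) = x.
Proof. by rewrite -actM gmulV act1. Qed.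

Lemma orbit_refl a : orbit G act a a.
Proof. by exists (gone G); rewrite act1. Qed.

Lemma orbit_act a x (T : G) : orbit G act a x -> orbit G act a (act T x).
Proof. by move=> [U ->]; exists (gmul G T U); rewrite actM. Qed.

Lemma orbit_eq a b : orbit G act a b -> orbit G act b = orbit G act a.
Proof.
move=> [T ->]; apply: functional_extensionality => x.
apply: propositional_extensionality; split; move=> [U ->].
- by exists (gmul G U T); rewrite actM.
- by exists (gmul G U (ginv G T)); rewrite actM act_invK.
Qed.

Lemma orbits_witness (A : orbits G act) : exists a, proj1_sig A a.
Proof. by have [a ->] := proj2_sig A; exists a; apply: orbit_refl. Qed.

Lemma orbits_act {A : orbits G act} {x} (T : G) :
  proj1_sig A x -> proj1_sig A (act T x).
Proof. by have [a ->] := proj2_sig A; apply: orbit_act. Qed.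

Lemma orbits_orbit {A : orbits G act} {x y} :
  proj1_sig A x -> proj1_sig A y -> orbit G act x y.
Proof. by have [a ->] := proj2_sig A => Ax; rewrite (orbit_eq Ax). Qed.

Lemma orbits_eq {A B : orbits G act} {x} :
  proj1_sig A x -> proj1_sig B x -> A = B.
Proof.
case: A B => [A pA] [B pB] /= Ax Bx.
have AB : A = B.
  have [a eA] := pA; have [b eB] := pB; rewrite eA in Ax; rewrite eB in Bx.
  by rewrite eA eB -(orbit_eq Ax) (orbit_eq Bx).
by subst B; rewrite (proof_irrelevance _ pA pB).
Qed.

Variable le : S -> S -> Prop.

Lemma strong_rel_preorder : is_preorder le -> is_preorder (@strong_rel G S le act).
Proof.
move=> [le_refl le_trans]; split.
- by move=> A a Aa; exists a.
- move=> A B C AB BC a Aa.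
  have [b [Bb le_ab]] := AB a Aa; have [c [Cc le_bc]] := BC b Bb.
  by exists c; split; [|apply: le_trans le_bc].
Qed.

Lemma strong_rel_weak A B : @strong_rel G S le act A B -> @weak_rel G S le act A B.
Proof.
have [a Aa] := orbits_witness A.
by move=> AB; have [b [Bb le_ab]] := AB a Aa; exists a, b.
Qed.

Lemma increasing_weak_rel_strong A B :
  increasing G le act -> @weak_rel G S le act A B -> @strong_rel G S le act A B.
Proof.
move=> incr [a [b [Aa [Bb le_ab]]]] a' Aa'.
have [T ->] := orbits_orbit Aa Aa'.
by exists (act T b); split; [apply: orbits_act | apply: incr].
Qed.

Lemma transverse_orbit_le_eq x y :
  transverse G le act -> orbit G act x y -> le x y -> x = y.
Proof.
move=> trans [T ->] le_xTx.
by have := trans (ginv G T) (act T x); rewrite act_invK; apply.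
Qed.

Lemma transverse_strong_rel_anti A B :
  is_partial_order le -> transverse G le act ->
  @strong_rel G S le act A B -> @strong_rel G S le act B A -> A = B.
Proof.
move=> [[_ le_trans] le_anti] trans AB BA.
have [a Aa] := orbits_witness A.
have [b [Bb le_ab]] := AB a Aa; have [a' [Aa' le_ba']] := BA b Bb.
have aa' : a = a'.
  by apply: transverse_orbit_le_eq (orbits_orbit Aa Aa') (le_trans _ _ _ le_ab le_ba').
have ab : a = b by apply: le_anti; rewrite // aa'.
by apply: (orbits_eq Aa); rewrite ab.
Qed.

End Orbits.

Theorem theorem1 (G : group) (S : Type) (le : S -> S -> Prop)
  (act : G -> S -> S) (Hle : @is_partial_order S le)
  (Hact : @is_action G S act) :
  @is_preorder (@orbits G S act) (@strong_rel G S le act) /\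
  (@increasing G S le act ->
     forall A B : @orbits G S act,
       @strong_rel G S le act A B <-> @weak_rel G S le act A B) /\
  (@transverse G S le act ->
     @is_partial_order (@orbits G S act) (@strong_rel G S le act)).
Proof.
have pre := strong_rel_preorder G act (proj1 Hle).
split; [exact: pre | split].
- move=> incr A B; split; first exact: strong_rel_weak.
  exact: increasing_weak_rel_strong.
- move=> trans; split; first exact: pre.
  by move=> A B; apply: transverse_strong_rel_anti.
Qed.
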